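(* Let $q$ be a prime power, let $\mathbb{K}$ be a field containing $\mathbb{F}_q$, and let $f,g\in\mathbb{K}[X]$. Put $F(X)=f(X^{q-1})$ and $G(X)=\prod_{w\in\mathbb{F}_q^\times} g(wX)$. Suppose that $G$ has no repeated roots in an algebraic closure $\overline{\mathbb{K}}$ of $\mathbb{K}$. If every root of $g$ in $\overline{\mathbb{K}}$ is also a root of $F$, then $G$ divides $F$ in $\mathbb{K}[X]$. *)

From HB Require Import structures.
From mathcomp Require Import all_boot all_order all_algebra all_field.
Set Implicit Arguments. Unset Strict Implicit. Unset Printing Implicit Defensive.
Import GRing.Theory.
Local Open Scope ring_scope.

Definition polyF (Fq : finFieldType) (K : fieldType) (f : {poly K}) : {poly K} :=
  f \Po 'X^(#|Fq|.-1).

Definition polyG (Fq : finFieldType) (K : fieldType) (iota : {rmorphism Fq -> K})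
  (g : {poly K}) : {poly K} :=
  \prod_(w : Fq | w != 0) (g \Po (iota w *: 'X)).

Definition no_repeated_roots (K : fieldType) (L : fieldType) (phi : {rmorphism K -> L})
  (p : {poly K}) : Prop :=
  forall x : L, ~~ ((('X - x%:P) ^+ 2) %| map_poly phi p).

From HB Require Import structures.
From mathcomp Require Import all_boot all_order all_algebra all_field.
Import GRing.Theory.
Local Open Scope ring_scope.

(* Every root of G over the algebraic closure has the form x with w x a root
   of g for some w in Fq^x; since w^(q-1) = 1, F(x) = f((w x)^(q-1)) = 0.
   Hence every root of the squarefree polynomial G is a root of F, and a
   squarefree polynomial over an algebraically closed field divides every
   polynomial vanishing at all of its roots. *)

Lemma uniq_of_sqfree_prod_XsubC (R : idomainType) (r : seq R) :
  (forall x : R, ~~ ((('X - x%:P) ^+ 2) %| \prod_(z <- r) ('X - z%:P))) ->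
  uniq r.
Proof.
elim: r => [//|z r IHr] sqfree /=; apply/andP; split.
  apply/negP => zr; move: (sqfree z); rewrite big_cons expr2.
  by rewrite dvdp_mul2l ?polyXsubC_eq0 // dvdp_XsubCl root_prod_XsubC zr.
apply: IHr => x; apply/negP => dvd_x; move/negP: (sqfree x); apply.
by rewrite big_cons dvdp_mull.
Qed.

Lemma sqfree_dvdp_closed (L : closedFieldType) (p q : {poly L}) :
  (forall x : L, ~~ ((('X - x%:P) ^+ 2) %| p)) ->
  (forall x, root p x -> root q x) -> p %| q.
Proof.
move=> sqfree roots_pq.
have p_neq0 : p != 0 by apply: contraNneq (sqfree 0) => ->; rewrite dvdp0.
have lc_neq0 : lead_coef p != 0 by rewrite lead_coef_eq0.
have [r pE] := closed_field_poly_normal p.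
have uniq_r : uniq r.
  by apply: uniq_of_sqfree_prod_XsubC => x; move: (sqfree x); rewrite pE dvdpZr.
have roots_q : all (root q) r.
  by apply/allP => z zr; apply: roots_pq; rewrite pE rootZ // root_prod_XsubC.
by rewrite pE dvdpZl // uniq_roots_dvdp // uniq_rootsE.
Qed.

Lemma expf_card_pred (F : finFieldType) (x : F) : x != 0 -> x ^+ #|F|.-1 = 1.
Proof.
move=> x_neq0; apply: (mulIf x_neq0); rewrite mul1r -exprSr.
by rewrite prednK ?expf_card // (ltn_trans _ (finNzRing_gt1 F)).
Qed.

Lemma horner_comp_Xn_unity (R : comNzRingType) (p : {poly R}) n (c x : R) :
  c ^+ n = 1 -> (p \Po 'X^n).[c * x] = (p \Po 'X^n).[x].
Proof. by move=> cn1; rewrite !horner_comp !hornerXn exprMn cn1 mul1r. Qed.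

Lemma root_polyG (Fq : finFieldType) (K L : fieldType)
    (iota : {rmorphism Fq -> K}) (phi : {rmorphism K -> L}) (g : {poly K}) x :
  root (map_poly phi (polyG iota g)) x ->
  exists2 w : Fq, w != 0 & root (map_poly phi g) (phi (iota w) * x).
Proof.
rewrite /polyG rmorph_prod /root horner_prod => /prodf_eq0 [w w_neq0].
rewrite /= map_comp_poly horner_comp map_polyZ map_polyX hornerZ hornerX.
by exists w.
Qed.

Lemma root_polyF_unit (Fq : finFieldType) (K L : fieldType)
    (iota : {rmorphism Fq -> K}) (phi : {rmorphism K -> L}) (f : {poly K})
    (w : Fq) x :
  w != 0 ->
  root (map_poly phi (polyF Fq f)) (phi (iota w) * x) =
  root (map_poly phi (polyF Fq f)) x.
Proof.
move=> w_neq0; rewrite /root /polyF map_comp_poly map_polyXn.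
by rewrite horner_comp_Xn_unity // -!rmorphXn expf_card_pred // !rmorph1.
Qed.

Theorem lemma1 (Fq : finFieldType) (K : fieldType) (iota : {rmorphism Fq -> K})
  (L : closedFieldType) (phi : {rmorphism K -> L}) (f g : {poly K}) :
  no_repeated_roots phi (polyG iota g) ->
  (forall x : L, root (map_poly phi g) x -> root (map_poly phi (polyF Fq f)) x) ->
  polyG iota g %| polyF Fq f.
Proof.
move=> sqfreeG roots_gF; rewrite -(dvdp_map phi).
apply: sqfree_dvdp_closed => // x /root_polyG [w w_neq0 /roots_gF].
by rewrite root_polyF_unit.
Qed.
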